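(* Let $L$ be a finite lattice. Then $\mathsf{C}(L)=\mathsf{Pol}_{0,1}(L)$ if and only if, for each join-irreducible element $a\in L$, the function $\chi_a$ is a (unary) polynomial of $L$.
   Context: $L$ is a finite lattice with least element $0$ and greatest element $1$. An $n$-ary aggregation function on $L$ ($n\ge 1$) is a map $A:L^n\to L$ that is nondecreasing in the componentwise order ($\mathbf x\le\mathbf y$ implies $A(\mathbf x)\le A(\mathbf y)$) and satisfies $A(0,\dots,0)=0$, $A(1,\dots,1)=1$. $\mathsf{C}(L)$ is the set of all aggregation functions on $L$ (of all arities). An $n$-ary polynomial on $L$ is any function $L^n\to L$ obtained in finitely many steps from projections and constant functions by pointwise joins and meets; $\mathsf{Pol}_{0,1}(L)$ is the set of polynomials $p$ (of arity $\ge1$) with $p(0,\dots,0)=0$ and $p(1,\dots,1)=1$. For $a\in L$, $\chi_a:L\to L$ is defined by $\chi_a(x)=1$ if $x\ge a$ and $x\ne 0$, and $\chi_a(x)=0$ otherwise. An element $a$ is join-irreducible if $a\neq 0$ and $a=b\vee c$ implies $a=b$ or $a=c$. *)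

From HB Require Import structures.
From mathcomp Require Import all_boot all_order.
Set Implicit Arguments. Unset Strict Implicit. Unset Printing Implicit Defensive.
Import Order.Theory.
Local Open Scope order_scope.

Inductive pterm (T : Type) (n : nat) : Type :=
  | PVar of 'I_n
  | PConst of T
  | PJoin of pterm T n & pterm T n
  | PMeet of pterm T n & pterm T n.

Section Poly.
Context {d : Order.disp_t} (L : finTBLatticeType d).

Fixpoint peval (n : nat) (t : pterm L n) (x : 'I_n -> L) : L :=
  match t with
  | PVar i => x i
  | PConst c => c
  | PJoin t1 t2 => peval t1 x `|` peval t2 x
  | PMeet t1 t2 => peval t1 x `&` peval t2 x
  end.

Definition is_polynomial (n : nat) (f : ('I_n -> L) -> L) : Prop :=
  exists t : pterm L n, forall x, f x = peval t x.

Definition is_aggregation (n : nat) (f : ('I_n -> L) -> L) : Prop :=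
  [/\ (0 < n)%N,
      (forall x y : 'I_n -> L, (forall i, x i <= y i) -> f x <= f y),
      f (fun _ => \bot) = \bot &
      f (fun _ => \top) = \top].

Definition in_Pol01 (n : nat) (f : ('I_n -> L) -> L) : Prop :=
  [/\ (0 < n)%N, is_polynomial f, f (fun _ => \bot) = \bot &
      f (fun _ => \top) = \top].

Definition chi (a x : L) : L :=
  if (a <= x) && (x != \bot) then \top else \bot.

Definition join_irreducible (a : L) : Prop :=
  a != \bot /\ forall b c : L, a = b `|` c -> a = b \/ a = c.

Definition is_unary_polynomial (g : L -> L) : Prop :=
  is_polynomial (fun x : 'I_1 -> L => g (x ord0)).

End Poly.

(* An aggregation function f is recovered from its values as
     f x = \join_c (f c `&` \meet_i [c i <= x i]),
   where [c <= y] is the up-indicator of c (top if c <= y, bottom otherwise).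
   So f is a polynomial as soon as every up-indicator is a unary polynomial.
   The up-indicator of bottom is constant, that of a join-irreducible a is chi a,
   and [b `|` e <= y] = [b <= y] `&` [e <= y]; since every element of a finite
   lattice is obtained from bottom and join-irreducibles by finitely many joins,
   the chi a generate all up-indicators.  Conversely, chi a is a unary
   aggregation function. *)

From HB Require Import structures.
From mathcomp Require Import all_boot all_order.
Set Implicit Arguments. Unset Strict Implicit. Unset Printing Implicit Defensive.
Import Order.Theory.
Local Open Scope order_scope.

Lemma lt_ind (d : Order.disp_t) (T : finPOrderType d) (P : T -> Prop) :
  (forall c, (forall b, b < c -> P b) -> P c) -> forall c, P c.
Proof.
move=> IH c; have [k] := ubnP #|[set y | y < c]|; elim: k c => // k IHk c lt_card.
apply: IH => b ltbc; apply: IHk; rewrite -ltnS; apply: leq_trans lt_card; apply: proper_card.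
apply/properP; split; last by exists b; rewrite !inE ?ltxx.
by apply/subsetP => y; rewrite !inE => /lt_trans; apply.
Qed.

Section Polynomials.
Context {d : Order.disp_t} (L : finTBLatticeType d).

Lemma eq_polynomial n (f g : ('I_n -> L) -> L) :
  f =1 g -> is_polynomial g -> is_polynomial f.
Proof. by move=> eq_fg [t Ht]; exists t => x; rewrite eq_fg. Qed.

Lemma polynomial_const n (c : L) : is_polynomial (fun _ : 'I_n -> L => c).
Proof. by exists (PConst n c). Qed.

Lemma polynomial_join n (f g : ('I_n -> L) -> L) :
  is_polynomial f -> is_polynomial g -> is_polynomial (fun x => f x `|` g x).
Proof. by move=> [t Ht] [u Hu]; exists (PJoin t u) => x /=; rewrite Ht Hu. Qed.

Lemma polynomial_meet n (f g : ('I_n -> L) -> L) :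
  is_polynomial f -> is_polynomial g -> is_polynomial (fun x => f x `&` g x).
Proof. by move=> [t Ht] [u Hu]; exists (PMeet t u) => x /=; rewrite Ht Hu. Qed.

Lemma polynomial_bigjoin n (I : Type) (s : seq I) (P : pred I)
    (F : I -> ('I_n -> L) -> L) :
  (forall i, is_polynomial (F i)) ->
  is_polynomial (fun x => \join_(i <- s | P i) F i x).
Proof.
move=> polyF; elim: s => [|i s IH].
  by apply: eq_polynomial (polynomial_const n \bot) => x; rewrite big_nil.
case: (boolP (P i)) => Pi; last by apply: eq_polynomial IH => x; rewrite big_cons (negbTE Pi).
by apply: eq_polynomial (polynomial_join (polyF i) IH) => x; rewrite big_cons Pi.
Qed.

Lemma polynomial_bigmeet n (I : Type) (s : seq I) (P : pred I)
    (F : I -> ('I_n -> L) -> L) :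
  (forall i, is_polynomial (F i)) ->
  is_polynomial (fun x => \meet_(i <- s | P i) F i x).
Proof.
move=> polyF; elim: s => [|i s IH].
  by apply: eq_polynomial (polynomial_const n \top) => x; rewrite big_nil.
case: (boolP (P i)) => Pi; last by apply: eq_polynomial IH => x; rewrite big_cons (negbTE Pi).
by apply: eq_polynomial (polynomial_meet (polyF i) IH) => x; rewrite big_cons Pi.
Qed.

Fixpoint psubst n (i : 'I_n) (t : pterm L 1) : pterm L n :=
  match t with
  | PVar _ => PVar L i
  | PConst c => PConst n c
  | PJoin t1 t2 => PJoin (psubst i t1) (psubst i t2)
  | PMeet t1 t2 => PMeet (psubst i t1) (psubst i t2)
  end.

Lemma peval_psubst n (i : 'I_n) t (x : 'I_n -> L) :
  peval (psubst i t) x = peval t (fun _ => x i).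
Proof. by elim: t => //= t1 -> t2 ->. Qed.

Lemma polynomial_unary_comp n (i : 'I_n) (g : L -> L) :
  is_unary_polynomial g -> is_polynomial (fun x : 'I_n -> L => g (x i)).
Proof. by move=> [t Ht]; exists (psubst i t) => x; rewrite peval_psubst -Ht. Qed.

Lemma peval_homo n (t : pterm L n) (x y : 'I_n -> L) :
  (forall i, x i <= y i) -> peval t x <= peval t y.
Proof. by move=> lexy; elim: t => //= t1 le1 t2 le2; [apply: leU2 | apply: leI2]. Qed.

End Polynomials.

Section UpIndicators.
Context {d : Order.disp_t} (L : finTBLatticeType d).
Implicit Types (a b c e x : L).

Definition up_indicator c x : L := if c <= x then \top else \bot.

Lemma up_indicator0 x : up_indicator \bot x = \top.
Proof. by rewrite /up_indicator le0x. Qed.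

Lemma up_indicatorU b e x :
  up_indicator (b `|` e) x = up_indicator b x `&` up_indicator e x.
Proof.
by rewrite /up_indicator leUx; case: (b <= x); case: (e <= x);
  rewrite ?meetxx ?meet0x ?meetx0.
Qed.

Lemma chi_up_indicator a : a != \bot -> chi a =1 up_indicator a.
Proof.
move=> a0 x; rewrite /chi /up_indicator; case: (boolP (a <= x)) => //= ax.
by case: eqP => // x0; move: ax; rewrite x0 lex0 (negbTE a0).
Qed.

Lemma join_irreducibleVsplit c : c != \bot ->
  join_irreducible c \/ exists b e, [/\ b < c, e < c & c = b `|` e].
Proof.
move=> c0; case: (boolP [exists b, exists e, (b < c) && (e < c) && (c == b `|` e)]).
  by move=> /existsP[b /existsP[e /andP[/andP[bc ec] /eqP def_c]]]; right; exists b, e.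
move=> /existsPn no_split; left; split=> // b e def_c.
have [|bc] := eqVneq c b; [by left | right; apply/eqP; apply: contraNT (no_split b)].
move=> ce; apply/existsP; exists e; rewrite def_c eqxx andbT !lt_neqAle leUl leUr.
by rewrite -def_c eq_sym bc eq_sym ce.
Qed.

Lemma up_indicator_polynomial :
  (forall a, join_irreducible a -> is_unary_polynomial (chi a)) ->
  forall c, is_unary_polynomial (up_indicator c).
Proof.
move=> chi_poly; elim/lt_ind => c IH.
have [->|c0] := eqVneq c \bot.
  by apply: eq_polynomial (polynomial_const 1 \top) => x; rewrite up_indicator0.
have [/chi_poly|[b [e [bc ec ->]]]] := join_irreducibleVsplit c0.
  by apply: eq_polynomial => x; rewrite chi_up_indicator.
apply: eq_polynomial (polynomial_meet (IH b bc) (IH e ec)) => x.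
exact: up_indicatorU.
Qed.

End UpIndicators.

Section Aggregation.
Context {d : Order.disp_t} (L : finTBLatticeType d).

Lemma homo_up_indicator_expansion n (f : ('I_n -> L) -> L) :
  (forall x y : 'I_n -> L, (forall i, x i <= y i) -> f x <= f y) ->
  forall x, f x = \join_(c : {ffun 'I_n -> L})
                    (f c `&` \meet_(i < n) up_indicator (c i) (x i)).
Proof.
move=> homo_f x; apply/le_anti/andP; split.
  apply: (joins_min (j := [ffun i => x i])) => //; rewrite lexI.
  apply/andP; split; first by apply: homo_f => i; rewrite ffunE.
  by apply/meetsP => i _; rewrite /up_indicator ffunE lexx.
apply/joinsP => c _; case: (boolP [forall i, c i <= x i]).
  by move=> /forallP lecx; apply: le_trans (leIl _ _) (homo_f _ _ lecx).
move=> /forallPn[i not_lecx]; apply: le_trans (leIr _ _) _.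
by apply: (meets_max (j := i)) => //; rewrite /up_indicator (negbTE not_lecx).
Qed.

Lemma aggregation_polynomial :
  (forall a : L, join_irreducible a -> is_unary_polynomial (chi a)) ->
  forall n (f : ('I_n -> L) -> L), is_aggregation f -> is_polynomial f.
Proof.
move=> chi_poly n f [_ homo_f _ _].
apply: eq_polynomial (homo_up_indicator_expansion homo_f) _.
apply: polynomial_bigjoin => c; apply: polynomial_meet; first exact: polynomial_const.
apply: polynomial_bigmeet => i; apply: polynomial_unary_comp.
exact: up_indicator_polynomial.
Qed.

Lemma chi_aggregation (a : L) : is_aggregation (fun x : 'I_1 -> L => chi a (x ord0)).
Proof.
split=> //; last by rewrite /chi lex1 /=; case: eqP.
- move=> x y /(_ ord0); rewrite /chi; set u := x ord0; set v := y ord0 => le_uv.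
  case: (boolP ((a <= u) && (u != \bot))) => [/andP[au u0]|_]; last exact: le0x.
  rewrite (le_trans au le_uv); case: eqP => // v0.
  by move: u0; rewrite -lex0 -v0 le_uv.
- by rewrite /chi eqxx andbF.
Qed.

End Aggregation.

Theorem mainTheorem2 (d : Order.disp_t) (L : finTBLatticeType d) :
  (forall (n : nat) (f : ('I_n -> L) -> L), is_aggregation f <-> in_Pol01 f)
  <->
  (forall a : L, join_irreducible a -> is_unary_polynomial (chi a)).
Proof.
split=> [C_eq_Pol a _ | chi_poly n f].
  by have [] := (C_eq_Pol 1 _).1 (chi_aggregation a).
split=> [aggr_f | [? [t Ht] ? ?]].
  have poly_f := aggregation_polynomial chi_poly aggr_f.
  by case: aggr_f.
by split=> // x y lexy; rewrite !Ht peval_homo.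
Qed.
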